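(* Let $\Omega$ be a bounded domain in $\mathbb R^n$, $n\ge3$, and let $(f,\Gamma)$ satisfy the standing structural assumptions. If $0<w\in LSC(\Omega)$ is a viscosity super-solution of $f(\lambda(-A^u))=1$ in $\Omega$ with $w(x)\to+\infty$ as $\mathrm{dist}(x,\partial\Omega)\to0$, and if $\mathbb R^n\setminus\bar\Omega$ contains a ball $B_R(x_0)$, then $w\ge u^{(out)}_{R,x_0}>0$ in $\Omega$.
   Context: Let $n\ge3$. For a positive $C^2$ function $u$, its conformal Hessian is $A^u=-\frac{2}{n-2}u^{-\frac{n+2}{n-2}}\nabla^2u+\frac{2n}{(n-2)^2}u^{-\frac{2n}{n-2}}\nabla u\otimes\nabla u-\frac{2}{(n-2)^2}u^{-\frac{2n}{n-2}}|\nabla u|^2I$, and $\lambda(-A^u)$ is the vector of eigenvalues of $-A^u$. Let $\Gamma_n=\{\mu:\mu_i>0\ \forall i\}$. Standing structural assumptions on $(f,\Gamma)$: $\Gamma\subset\mathbb R^n$ is an open symmetric cone with vertex at the origin, $\Gamma+\Gamma_n\subset\Gamma$; $f\in C^0(\bar\Gamma)$ symmetric, $f>0$ in $\Gamma$, $f=0$ on $\partial\Gamma$, $f(\lambda+\mu)\ge f(\lambda)$ for $\lambda\in\Gamma,\mu\in\Gamma_n$, $f$ homogeneous of some positive degree. Viscosity super-solution: $w\in LSC(\Omega)$ (lower semicontinuous, values in $\mathbb R\cup\{+\infty\}$, $w\not\equiv+\infty$) such that for every $x_0\in\Omega$, $\varphi\in C^2(\Omega)$ with $(w-\varphi)(x_0)=0$,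 $w-\varphi\ge0$ near $x_0$, either $\lambda(-A^\varphi(x_0))\notin\bar\Gamma$ or $f(\lambda(-A^\varphi(x_0)))\le1$. Canonical solutions: there is a unique constant $\alpha=\alpha(f)>0$ such that for all $R>0$, $x_0\in\mathbb R^n$ the function $u^{(out)}_{R,x_0}(x)=\alpha\big(\frac{R}{|x-x_0|^2-R^2}\big)^{\frac{n-2}{2}}$ satisfies $f(\lambda(-A^{u}))=1$ in $\mathbb R^n\setminus\bar B_R(x_0)$ (and $u^{(in)}_{R,x_0}(x)=\alpha\big(\frac{R}{R^2-|x-x_0|^2}\big)^{\frac{n-2}{2}}$ satisfies it in $B_R(x_0)$). *)

From mathcomp Require Import all_boot.
From Stdlib Require Import Reals.


Unset Printing Implicit Defensive.
Open Scope R_scope.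

Definition vec (n : nat) := 'I_n -> R.
Definition mat (n : nat) := 'I_n -> 'I_n -> R.

Definition rsum {n : nat} (F : 'I_n -> R) : R := \big[Rplus/0]_(i < n) F i.

Definition dot {n} (x y : vec n) : R := rsum (fun i => x i * y i).
Definition nnorm {n} (x : vec n) : R := sqrt (dot x x).
Definition vsub {n} (x y : vec n) : vec n := fun i => x i - y i.
Definition vadd {n} (x y : vec n) : vec n := fun i => x i + y i.
Definition vscale {n} (t : R) (x : vec n) : vec n := fun i => t * x i.
Definition ndist {n} (x y : vec n) : R := nnorm (vsub x y).
Definition matvec {n} (M : mat n) (v : vec n) : vec n :=
  fun k => rsum (fun j => M k j * v j).
Definition mopp {n} (M : mat n) : mat n := fun i j => - M i j.

Definition is_eigvals {n} (M : mat n) (mu : vec n) : Prop :=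
  exists V : 'I_n -> vec n,
    (forall i j, dot (V i) (V j) = if i == j then 1 else 0) /\
    (forall i, matvec M (V i) = vscale (mu i) (V i)).

Definition nclosure {n} (S : vec n -> Prop) (x : vec n) : Prop :=
  forall eps, 0 < eps -> exists y, S y /\ ndist x y < eps.
Definition is_open {n} (S : vec n -> Prop) : Prop :=
  forall x, S x -> exists d, 0 < d /\ forall y, ndist y x < d -> S y.
Definition nboundary {n} (S : vec n -> Prop) (x : vec n) : Prop :=
  nclosure S x /\ ~ S x.
Definition is_connected {n} (S : vec n -> Prop) : Prop :=
  ~ exists U V : vec n -> Prop,
      is_open U /\ is_open V /\
      (exists x, S x /\ U x) /\ (exists x, S x /\ V x) /\
      (forall x, S x -> U x \/ V x) /\
      (forall x, S x -> U x -> V x -> False).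
Definition nbounded {n} (S : vec n -> Prop) : Prop :=
  exists M, forall x, S x -> nnorm x <= M.
Definition ndomain {n} (S : vec n -> Prop) : Prop :=
  is_open S /\ (exists x, S x) /\ is_connected S.

Definition IsC2 {n} (U : vec n -> Prop) (phi : vec n -> R)
  (g : vec n -> vec n) (H : vec n -> mat n) : Prop :=
  (forall x, U x -> forall eps, 0 < eps -> exists d, 0 < d /\
     forall y, ndist y x < d ->
       Rabs (phi y - phi x - dot (g x) (vsub y x)) <= eps * ndist y x) /\
  (forall x, U x -> forall i, forall eps, 0 < eps -> exists d, 0 < d /\
     forall y, ndist y x < d ->
       Rabs (g y i - g x i - dot (H x i) (vsub y x)) <= eps * ndist y x) /\
  (forall x, U x -> forall i j, forall eps, 0 < eps -> exists d, 0 < d /\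
     forall y, U y -> ndist y x < d -> Rabs (H y i j - H x i j) < eps).

(* conformal Hessian A^u at a point, from the values u, grad u, D^2 u *)
Definition conf_hess (n : nat) (u : R) (g : vec n) (H : mat n) : mat n :=
  let m := INR n in
  fun i j =>
    - (2 / (m - 2)) * Rpower u (- ((m + 2) / (m - 2))) * H i j
    + (2 * m / ((m - 2) * (m - 2))) * Rpower u (- (2 * m / (m - 2))) * (g i * g j)
    - (2 / ((m - 2) * (m - 2))) * Rpower u (- (2 * m / (m - 2)))
        * dot g g * (if i == j then 1 else 0).

Definition structural (n : nat) (f : vec n -> R) (Gam : vec n -> Prop) : Prop :=
  is_open Gam /\ (exists l, Gam l) /\ ~ Gam (fun _ => 0) /\
  (forall l t, Gam l -> 0 < t -> Gam (vscale t l)) /\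
  (forall (s : 'I_n -> 'I_n) l, bijective s -> Gam l -> Gam (fun i => l (s i))) /\
  (forall l mu, Gam l -> (forall i, 0 < mu i) -> Gam (vadd l mu)) /\
  (forall l, nclosure Gam l -> forall eps, 0 < eps -> exists d, 0 < d /\
     forall mu, nclosure Gam mu -> ndist mu l < d -> Rabs (f mu - f l) < eps) /\
  (forall (s : 'I_n -> 'I_n) l, bijective s -> nclosure Gam l ->
     f (fun i => l (s i)) = f l) /\
  (forall l, Gam l -> 0 < f l) /\
  (forall l, nboundary Gam l -> f l = 0) /\
  (forall l mu, Gam l -> (forall i, 0 < mu i) -> f l <= f (vadd l mu)) /\
  (exists p, 0 < p /\ forall l t, nclosure Gam l -> 0 < t ->
     f (vscale t l) = Rpower t p * f l).

Definition solves_at {n} (f : vec n -> R) (Gam : vec n -> Prop)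
  (u : R) (g : vec n) (H : mat n) : Prop :=
  forall mu, is_eigvals (mopp (conf_hess n u g H)) mu -> nclosure Gam mu /\ f mu = 1.

Definition u_out (n : nat) (alpha Rr : R) (x0 x : vec n) : R :=
  alpha * Rpower (Rr / (ndist x x0 ^ 2 - Rr ^ 2)) ((INR n - 2) / 2).
Definition u_in (n : nat) (alpha Rr : R) (x0 x : vec n) : R :=
  alpha * Rpower (Rr / (Rr ^ 2 - ndist x x0 ^ 2)) ((INR n - 2) / 2).

Definition canonical_const (n : nat) (f : vec n -> R) (Gam : vec n -> Prop)
  (alpha : R) : Prop :=
  0 < alpha /\
  (forall Rr (x0 : vec n), 0 < Rr ->
     forall g H, IsC2 (fun x => Rr < ndist x x0) (u_out n alpha Rr x0) g H ->
     forall x, Rr < ndist x x0 -> solves_at f Gam (u_out n alpha Rr x0 x) (g x) (H x)) /\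
  (forall Rr (x0 : vec n), 0 < Rr ->
     forall g H, IsC2 (fun x => ndist x x0 < Rr) (u_in n alpha Rr x0) g H ->
     forall x, ndist x x0 < Rr -> solves_at f Gam (u_in n alpha Rr x0 x) (g x) (H x)).

Inductive ER := ERfin (r : R) | ERinf.
Definition ER_lt (a : R) (e : ER) : Prop :=
  match e with ERfin r => a < r | ERinf => True end.
Definition ER_le (a : R) (e : ER) : Prop :=
  match e with ERfin r => a <= r | ERinf => True end.

Definition lsc_on {n} (Om : vec n -> Prop) (w : vec n -> ER) : Prop :=
  forall x, Om x -> forall a, ER_lt a (w x) ->
    exists d, 0 < d /\ forall y, Om y -> ndist y x < d -> ER_lt a (w y).

Definition visc_supersol {n} (f : vec n -> R) (Gam : vec n -> Prop)
  (Om : vec n -> Prop) (w : vec n -> ER) : Prop :=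
  lsc_on Om w /\ (exists x, Om x /\ w x <> ERinf) /\
  forall x0, Om x0 -> forall phi g H, IsC2 Om phi g H ->
    w x0 = ERfin (phi x0) ->
    (exists d, 0 < d /\ forall y, Om y -> ndist y x0 < d -> ER_le (phi y) (w y)) ->
    forall mu, is_eigvals (mopp (conf_hess n (phi x0) (g x0) (H x0))) mu ->
      ~ nclosure Gam mu \/ f mu <= 1.

From HB Require Import structures.
From mathcomp Require Import all_boot zify.
From Stdlib Require Import Reals Lra Classical ClassicalEpsilon FunctionalExtensionality.
From Coquelicot Require Import Coquelicot.
Open Scope R_scope.

(* Every point of Om lies outside the closed ball B_R(x0). Suppose w(x) < u_R(x) at some x,
   where u_r denotes the canonical solution u^(out)_{r,x0}. Shrinking the radius to some rho < R
   keeps w(x) < u_rho(x), and u_rho is smooth, positive and bounded on Om. Let t be the largest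
   number with t u_rho <= w on Om; then t < 1. Since w blows up at the boundary of the bounded
   set Om, a minimizing sequence for w / u_rho has a limit point in Om, where t u_rho touches w
   from below by lower semicontinuity, and w > 0 forces t > 0. The radial function t u_rho has
   conformal Hessian t^(-4/(n-2)) > 1 times that of u_rho, so by homogeneity of f the test
   function t u_rho gives f(lambda(-A)) > 1 at the touching point, contradicting that w is a
   super-solution. *)

(** * Sums and Euclidean distance *)

HB.instance Definition _ :=
  Monoid.isComLaw.Build R 0 Rplus (fun a b c => esym (Rplus_assoc a b c)) Rplus_comm Rplus_0_l.

Lemma eq_rsum {n} (F G : 'I_n -> R) : (forall i, F i = G i) -> rsum F = rsum G.
Proof. by move=> FG; apply: eq_bigr => i _. Qed.

Lemma rsumD {n} (F G : 'I_n -> R) : rsum (fun i => F i + G i) = rsum F + rsum G.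
Proof. exact: big_split. Qed.

Lemma rsumMl {n} c (F : 'I_n -> R) : rsum (fun i => c * F i) = c * rsum F.
Proof. by symmetry; apply: (big_morph (Rmult c)) => [x y|]; ring. Qed.

Lemma rsumB {n} (F G : 'I_n -> R) : rsum (fun i => F i - G i) = rsum F - rsum G.
Proof.
rewrite (eq_rsum _ (fun i => F i + -1 * G i)) ?rsumD ?rsumMl; first ring.
by move=> i; ring.
Qed.

Lemma le_rsum {n} (F G : 'I_n -> R) : (forall i, F i <= G i) -> rsum F <= rsum G.
Proof.
move=> FG; apply: (big_ind2 (fun a b => a <= b)) => [|a b c d|i _]; try lra.
exact: FG.
Qed.

Lemma rsum_ge0 {n} (F : 'I_n -> R) : (forall i, 0 <= F i) -> 0 <= rsum F.
Proof.
move=> F0; apply: (big_ind (fun a => 0 <= a)) => [|a b|i _]; try lra.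
exact: F0.
Qed.

Lemma rsum_const {n} (b : R) : rsum (fun _ : 'I_n => b) = INR n * b.
Proof.
rewrite /rsum; elim: n => [|n IHn]; first by rewrite big_ord0 /=; ring.
by rewrite big_ord_recr S_INR /= IHn; ring.
Qed.

Lemma rsum_ge_term {n} (F : 'I_n -> R) i : (forall j, 0 <= F j) -> F i <= rsum F.
Proof.
move=> F0; rewrite /rsum (bigD1 i) //= -{1}(Rplus_0_r (F i)).
apply: Rplus_le_compat_l; apply: (big_ind (fun a => 0 <= a)) => [|a b|j _]; try lra.
exact: F0.
Qed.

Lemma rsum_delta {n} (a : 'I_n -> R) i :
  rsum (fun j => if i == j then a j else 0) = a i.
Proof.
rewrite /rsum (bigD1 i) //= eqxx big1; first ring.
by move=> j; rewrite eq_sym => /negbTE ->.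
Qed.

Lemma Rabs_rsum_le {n} (F : 'I_n -> R) : Rabs (rsum F) <= rsum (fun i => Rabs (F i)).
Proof.
apply: (big_ind2 (fun a b => Rabs a <= b)) => [|a b c d ac bd|i _].
- rewrite Rabs_R0; lra.
- by apply: Rle_trans (Rabs_triang _ _) _; lra.
- exact: Rle_refl.
Qed.

Lemma dot_ge0 {n} (x : vec n) : 0 <= dot x x.
Proof. by apply: rsum_ge0 => i; apply: Rle_0_sqr. Qed.

Lemma nnorm_ge0 {n} (x : vec n) : 0 <= nnorm x.
Proof. exact: sqrt_pos. Qed.

Lemma ndist_ge0 {n} (x y : vec n) : 0 <= ndist x y.
Proof. exact: nnorm_ge0. Qed.

Lemma ndist_sq {n} (x y : vec n) : ndist x y ^ 2 = dot (vsub x y) (vsub x y).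
Proof. by rewrite /ndist /nnorm /= Rmult_1_r sqrt_sqrt //; apply: dot_ge0. Qed.

Lemma ndist_sym {n} (x y : vec n) : ndist x y = ndist y x.
Proof. by rewrite /ndist /nnorm /dot /vsub; f_equal; apply: eq_rsum => i; ring. Qed.

Lemma ndistxx {n} (x : vec n) : ndist x x = 0.
Proof.
rewrite /ndist /nnorm /dot (eq_rsum _ (fun _ => 0)) ?rsum_const ?Rmult_0_r ?sqrt_0 //.
by move=> i; rewrite /vsub; ring.
Qed.

Lemma nnormZ {n} t (v : vec n) : nnorm (vscale t v) = Rabs t * nnorm v.
Proof.
rewrite /nnorm -sqrt_Rsqr_abs -sqrt_mult; [|exact: Rle_0_sqr|exact: dot_ge0].
by f_equal; rewrite /dot -rsumMl; apply: eq_rsum => i; rewrite /vscale /Rsqr; ring.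
Qed.

Lemma ndistZ {n} t (x y : vec n) : 0 <= t -> ndist (vscale t x) (vscale t y) = t * ndist x y.
Proof.
move=> t_ge0; rewrite /ndist -[X in X * _](Rabs_right t); last lra.
rewrite -nnormZ; f_equal; apply: functional_extensionality => i.
by rewrite /vsub /vscale; ring.
Qed.


Lemma Rabs_coord_le_nnorm {n} (x : vec n) i : Rabs (x i) <= nnorm x.
Proof.
rewrite /nnorm -sqrt_Rsqr_abs; apply: sqrt_le_1_alt.
by apply: (rsum_ge_term (fun j => x j * x j)) => j; apply: Rle_0_sqr.
Qed.

Lemma ndist_le_coord {n} (x y : vec n) e : 0 < e ->
  (forall i, Rabs (x i - y i) < e) -> ndist x y <= sqrt (INR n) * e.
Proof.
move=> e_gt0 xy; rewrite /ndist /nnorm -(sqrt_Rsqr e); last lra.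
rewrite -sqrt_mult; [|exact: pos_INR|exact: Rle_0_sqr].
apply: sqrt_le_1_alt; rewrite -rsum_const; apply: le_rsum => i.
have xyi := xy i; have := Rabs_pos (x i - y i).
rewrite /vsub /Rsqr -(Rabs_right (_ * _)) ?Rabs_mult; first nra.
exact/Rle_ge/Rle_0_sqr.
Qed.

Definition l1norm {n} (a : vec n) := rsum (fun i => Rabs (a i)).

Lemma l1norm_ge0 {n} (a : vec n) : 0 <= l1norm a.
Proof. by apply: rsum_ge0 => i; apply: Rabs_pos. Qed.

Lemma Rabs_dot_le {n} (a h : vec n) : Rabs (dot a h) <= l1norm a * nnorm h.
Proof.
apply: Rle_trans (Rabs_rsum_le _) _; rewrite Rmult_comm -rsumMl.
apply: le_rsum => i; rewrite Rabs_mult Rmult_comm.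
exact/Rmult_le_compat_r/Rabs_coord_le_nnorm/Rabs_pos.
Qed.

(** * Gradients and continuity at a point *)

Definition has_grad_at {n} (phi : vec n -> R) (x G : vec n) := forall eps, 0 < eps ->
  exists d, 0 < d /\ forall y, ndist y x < d ->
    Rabs (phi y - phi x - dot G (vsub y x)) <= eps * ndist y x.

Definition cont_at {n} (phi : vec n -> R) (x : vec n) := forall eps, 0 < eps ->
  exists d, 0 < d /\ forall y, ndist y x < d -> Rabs (phi y - phi x) < eps.

Definition sqdist {n} (x0 y : vec n) := dot (vsub y x0) (vsub y x0).

Lemma Rabs_mul_err_le c E e h : 0 <= e -> 0 <= h ->
  Rabs E <= e / (Rabs c + 1) * h -> Rabs c * Rabs E <= e * h.
Proof.
move=> e_ge0 h_ge0 E_le; have c_ge0 := Rabs_pos c.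
apply: Rle_trans (Rmult_le_compat_l _ _ _ c_ge0 E_le) _.
have -> : Rabs c * (e / (Rabs c + 1) * h) = Rabs c / (Rabs c + 1) * (e * h) by field; lra.
have : Rabs c / (Rabs c + 1) <= 1.
  by apply: (Rmult_le_reg_r (Rabs c + 1)); [lra|field_simplify; lra].
have : 0 <= Rabs c / (Rabs c + 1) by apply: Rdiv_le_0_compat; lra.
have : 0 <= e * h by apply: Rmult_le_pos.
nra.
Qed.

Lemma has_grad_at_lipschitz {n} {phi : vec n -> R} {x G} : has_grad_at phi x G ->
  exists d, 0 < d /\ forall y, ndist y x < d ->
    Rabs (phi y - phi x) <= (l1norm G + 1) * ndist y x.
Proof.
move=> dphi; have [d [d_gt0 hd]] := dphi 1 Rlt_0_1; exists d; split => // y yd.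
have := hd y yd; have := Rabs_dot_le G (vsub y x); rewrite /ndist => h1 h2.
have -> : phi y - phi x = (phi y - phi x - dot G (vsub y x)) + dot G (vsub y x) by ring.
by apply: Rle_trans (Rabs_triang _ _) _; lra.
Qed.

Lemma has_grad_at_cont {n} {phi : vec n -> R} {x G} : has_grad_at phi x G -> cont_at phi x.
Proof.
move=> /has_grad_at_lipschitz [d [d_gt0 hd]] eps eps_gt0.
have := l1norm_ge0 G; set K := l1norm G in hd * => K_ge0.
exists (Rmin d (eps / (K + 2))); split.
  by apply: Rmin_pos => //; apply: Rdiv_lt_0_compat; lra.
move=> y yd; have h1 := hd y (Rlt_le_trans _ _ _ yd (Rmin_l _ _)).
have h2 := Rlt_le_trans _ _ _ yd (Rmin_r _ _); have := ndist_ge0 y x => h3.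
have : (K + 2) * ndist y x < eps.
  have -> : eps = (K + 2) * (eps / (K + 2)) by field; lra.
  by apply: Rmult_lt_compat_l; lra.
nra.
Qed.

Lemma has_grad_at_const {n} (c : R) (x : vec n) : has_grad_at (fun _ => c) x (fun _ => 0).
Proof.
move=> eps eps_gt0; exists 1; split => [|y _]; first lra.
rewrite /dot (eq_rsum _ (fun _ => 0)) ?rsum_const; last by move=> j; ring.
have -> : c - c - INR n * 0 = 0 by ring.
by rewrite Rabs_R0; have := ndist_ge0 y x; nra.
Qed.

Lemma has_grad_at_coordZ {n} c (x0 x : vec n) i :
  has_grad_at (fun y => c * (y i - x0 i)) x (fun j => c * (if i == j then 1 else 0)).
Proof.
move=> eps eps_gt0; exists 1; split => [|y _]; first lra.
have -> : dot (fun j => c * (if i == j then 1 else 0)) (vsub y x) = c * (y i - x i).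
  rewrite /dot -(rsum_delta (fun j => c * vsub y x j) i); apply: eq_rsum => j.
  by case: (i == j); rewrite /vsub; ring.
have -> : c * (y i - x0 i) - c * (x i - x0 i) - c * (y i - x i) = 0 by ring.
by rewrite Rabs_R0; have := ndist_ge0 y x; nra.
Qed.

Lemma has_grad_at_sqdist {n} (x0 x : vec n) :
  has_grad_at (sqdist x0) x (fun j => 2 * (x j - x0 j)).
Proof.
move=> eps eps_gt0; exists eps; split => // y yd.
have -> : sqdist x0 y - sqdist x0 x - dot (fun j => 2 * (x j - x0 j)) (vsub y x)
          = ndist y x ^ 2.
  by rewrite ndist_sq /sqdist /dot -!rsumB; apply: eq_rsum => i; rewrite /vsub; ring.
have := ndist_ge0 y x => h; rewrite Rabs_right /=; nra.
Qed.

Lemma derivable_pt_lim_taylor1 {F : R -> R} {p D} : derivable_pt_lim F p D ->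
  forall eps, 0 < eps -> exists del, 0 < del /\ forall z, Rabs z < del ->
    Rabs (F (p + z) - F p - D * z) <= eps * Rabs z.
Proof.
move=> dF eps eps_gt0; have [del hdel] := dF eps eps_gt0.
exists del; split => [|z zdel]; first exact: cond_pos.
have [->|z_neq0] := Req_dec z 0.
  rewrite Rplus_0_r !Rmult_0_r Rabs_R0 Rminus_diag Rminus_0_r Rabs_R0; lra.
have -> : F (p + z) - F p - D * z = ((F (p + z) - F p) / z - D) * z by field.
rewrite Rabs_mult; apply: Rmult_le_compat_r; first exact: Rabs_pos.
by have := hdel z z_neq0 zdel; lra.
Qed.

Lemma has_grad_at_comp {n} (F : R -> R) (phi : vec n -> R) x G D :
  derivable_pt_lim F (phi x) D -> has_grad_at phi x G ->
  has_grad_at (fun y => F (phi y)) x (fun j => D * G j).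
Proof.
move=> dF dphi eps eps_gt0.
have [d1 [d1_gt0 lip]] := has_grad_at_lipschitz dphi.
set C := l1norm G + 1 in lip; have C_gt0 : 0 < C by rewrite /C; have := l1norm_ge0 G; lra.
have [del [del_gt0 tayF]] :=
  derivable_pt_lim_taylor1 dF (eps / (2 * C)) ltac:(apply: Rdiv_lt_0_compat; lra).
have D_ge0 := Rabs_pos D.
have [d2 [d2_gt0 tayphi]] :=
  dphi (eps / 2 / (Rabs D + 1)) ltac:(apply: Rdiv_lt_0_compat; lra).
exists (Rmin d1 (Rmin d2 (del / C))); split.
  by repeat apply: Rmin_pos => //; apply: Rdiv_lt_0_compat.
move=> y yd; have h_ge0 := ndist_ge0 y x; set h := ndist y x in yd h_ge0 *.
have yd1 := Rlt_le_trans _ _ _ yd (Rmin_l _ _).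
have yd2 := Rlt_le_trans _ _ _ yd (Rle_trans _ _ _ (Rmin_r _ _) (Rmin_l _ _)).
have yd3 := Rlt_le_trans _ _ _ yd (Rle_trans _ _ _ (Rmin_r _ _) (Rmin_r _ _)).
have dphi_le : Rabs (phi y - phi x) <= C * h := lip y yd1.
have dphi_lt : Rabs (phi y - phi x) < del.
  apply: Rle_lt_trans dphi_le _; have -> : del = C * (del / C) by field; lra.
  exact: Rmult_lt_compat_l.
have -> : dot (fun j => D * G j) (vsub y x) = D * dot G (vsub y x).
  by rewrite /dot -rsumMl; apply: eq_rsum => j; ring.
have -> : F (phi y) - F (phi x) - D * dot G (vsub y x) =
   (F (phi x + (phi y - phi x)) - F (phi x) - D * (phi y - phi x))
   + D * (phi y - phi x - dot G (vsub y x)).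
  by rewrite Rplus_minus; ring.
apply: Rle_trans (Rabs_triang _ _) _; rewrite Rabs_mult.
have errF : eps / (2 * C) * Rabs (phi y - phi x) <= eps / 2 * h.
  apply: Rle_trans (_ : eps / (2 * C) * (C * h) <= _).
    by apply: Rmult_le_compat_l => //; apply/Rlt_le/Rdiv_lt_0_compat; lra.
  by right; field; lra.
have errphi : Rabs D * Rabs (phi y - phi x - dot G (vsub y x)) <= eps / 2 * h.
  by apply: Rabs_mul_err_le (tayphi y yd2) => //; lra.
by have := tayF _ dphi_lt; lra.
Qed.

Lemma has_grad_at_mul {n} (a b : vec n -> R) x Ga Gb :
  has_grad_at a x Ga -> has_grad_at b x Gb ->
  has_grad_at (fun y => a y * b y) x (fun j => a x * Gb j + b x * Ga j).
Proof.
move=> da db eps eps_gt0.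
have [d1 [d1_gt0 lipb]] := has_grad_at_lipschitz db.
set C := l1norm Gb + 1 in lipb; have C_gt0 : 0 < C by rewrite /C; have := l1norm_ge0 Gb; lra.
have [d2 [d2_gt0 conta]] :=
  has_grad_at_cont da (eps / (3 * C)) ltac:(apply: Rdiv_lt_0_compat; lra).
have ax_ge0 := Rabs_pos (a x); have bx_ge0 := Rabs_pos (b x).
have [d3 [d3_gt0 taya]] :=
  da (eps / 3 / (Rabs (b x) + 1)) ltac:(apply: Rdiv_lt_0_compat; lra).
have [d4 [d4_gt0 tayb]] :=
  db (eps / 3 / (Rabs (a x) + 1)) ltac:(apply: Rdiv_lt_0_compat; lra).
exists (Rmin (Rmin d1 d2) (Rmin d3 d4)); split; first by repeat apply: Rmin_pos.
move=> y yd; have h_ge0 := ndist_ge0 y x; set h := ndist y x in yd h_ge0 taya tayb lipb *.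
have yd1 := Rlt_le_trans _ _ _ yd (Rle_trans _ _ _ (Rmin_l _ _) (Rmin_l _ _)).
have yd2 := Rlt_le_trans _ _ _ yd (Rle_trans _ _ _ (Rmin_l _ _) (Rmin_r _ _)).
have yd3 := Rlt_le_trans _ _ _ yd (Rle_trans _ _ _ (Rmin_r _ _) (Rmin_l _ _)).
have yd4 := Rlt_le_trans _ _ _ yd (Rle_trans _ _ _ (Rmin_r _ _) (Rmin_r _ _)).
have -> : dot (fun j => a x * Gb j + b x * Ga j) (vsub y x) =
          a x * dot Gb (vsub y x) + b x * dot Ga (vsub y x).
  by rewrite /dot -!rsumMl -rsumD; apply: eq_rsum => j; ring.
have -> : a y * b y - a x * b x - (a x * dot Gb (vsub y x) + b x * dot Ga (vsub y x))
  = a x * (b y - b x - dot Gb (vsub y x)) + b x * (a y - a x - dot Ga (vsub y x))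
    + (a y - a x) * (b y - b x) by ring.
apply: Rle_trans (Rabs_triang _ _) _.
apply: Rle_trans (Rplus_le_compat_r _ _ _ (Rabs_triang _ _)) _; rewrite !Rabs_mult.
have err_b : Rabs (a x) * Rabs (b y - b x - dot Gb (vsub y x)) <= eps / 3 * h.
  by apply: Rabs_mul_err_le (tayb y yd4) => //; lra.
have err_a : Rabs (b x) * Rabs (a y - a x - dot Ga (vsub y x)) <= eps / 3 * h.
  by apply: Rabs_mul_err_le (taya y yd3) => //; lra.
have err_ab : Rabs (a y - a x) * Rabs (b y - b x) <= eps / 3 * h.
  apply: Rle_trans (_ : eps / (3 * C) * (C * h) <= _).
    have := conta y yd2; have := lipb y yd1; rewrite -/h => hb ha.
    by apply: Rmult_le_compat; try apply: Rabs_pos; lra.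
  by right; field; lra.
lra.
Qed.

Lemma continuity_pt_ball {F : R -> R} {p} : continuity_pt F p ->
  forall eps, 0 < eps -> exists del, 0 < del /\ forall z, Rabs (z - p) < del ->
    Rabs (F z - F p) < eps.
Proof.
move=> cF eps eps_gt0; have [del [del_gt0 hdel]] := cF eps eps_gt0.
exists del; split => // z zp; have [->|z_neq] := Req_dec z p.
  by rewrite Rminus_diag Rabs_R0.
by apply: hdel; split => //; split => //; apply: not_eq_sym.
Qed.

Lemma cont_at_comp {n} (F : R -> R) (phi : vec n -> R) x :
  continuity_pt F (phi x) -> cont_at phi x -> cont_at (fun y => F (phi y)) x.
Proof.
move=> cF cphi eps eps_gt0; have [del [del_gt0 hdel]] := continuity_pt_ball cF eps eps_gt0.
have [d [d_gt0 hd]] := cphi del del_gt0.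
by exists d; split => // y yd; apply/hdel/hd.
Qed.

Lemma cont_at_add {n} (a b : vec n -> R) x :
  cont_at a x -> cont_at b x -> cont_at (fun y => a y + b y) x.
Proof.
move=> ca cb eps eps_gt0.
have [d1 [d1_gt0 h1]] := ca (eps / 2) ltac:(lra).
have [d2 [d2_gt0 h2]] := cb (eps / 2) ltac:(lra).
exists (Rmin d1 d2); split => [|y yd]; first exact: Rmin_pos.
have := h1 y (Rlt_le_trans _ _ _ yd (Rmin_l _ _)).
have := h2 y (Rlt_le_trans _ _ _ yd (Rmin_r _ _)).
have -> : a y + b y - (a x + b x) = (a y - a x) + (b y - b x) by ring.
by have := Rabs_triang (a y - a x) (b y - b x); lra.
Qed.

Lemma cont_at_mul {n} (a b : vec n -> R) x :
  cont_at a x -> cont_at b x -> cont_at (fun y => a y * b y) x.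
Proof.
move=> ca cb eps eps_gt0.
have ax_ge0 := Rabs_pos (a x); have bx_ge0 := Rabs_pos (b x).
set e := Rmin 1 (eps / (Rabs (a x) + Rabs (b x) + 1)).
have e_gt0 : 0 < e by apply: Rmin_pos; [lra|apply: Rdiv_lt_0_compat; lra].
have e_le1 : e <= 1 := Rmin_l _ _.
have e_small : e * (Rabs (a x) + Rabs (b x) + 1) <= eps.
  apply: Rle_trans (_ : eps / (Rabs (a x) + Rabs (b x) + 1)
                        * (Rabs (a x) + Rabs (b x) + 1) <= _).
    by apply: Rmult_le_compat_r; [lra|apply: Rmin_r].
  by right; field; lra.
have [d1 [d1_gt0 h1]] := ca e e_gt0; have [d2 [d2_gt0 h2]] := cb e e_gt0.
exists (Rmin d1 d2); split => [|y yd]; first exact: Rmin_pos.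
have ea := h1 y (Rlt_le_trans _ _ _ yd (Rmin_l _ _)).
have eb := h2 y (Rlt_le_trans _ _ _ yd (Rmin_r _ _)).
have -> : a y * b y - a x * b x =
  a x * (b y - b x) + b x * (a y - a x) + (a y - a x) * (b y - b x) by ring.
apply: Rle_lt_trans (Rabs_triang _ _) _.
apply: Rle_lt_trans (Rplus_le_compat_r _ _ _ (Rabs_triang _ _)) _; rewrite !Rabs_mult.
have := Rabs_pos (a y - a x); have := Rabs_pos (b y - b x).
nra.
Qed.

Lemma cont_at_const {n} (c : R) (x : vec n) : cont_at (fun _ => c) x.
Proof. exact/has_grad_at_cont/has_grad_at_const. Qed.

(** * Radial functions and the canonical solution *)

(* For k = (n - 2) / 2, [rprof A r k] is u_out as a function of q = |x - x0|^2;
   [rprof1] and [rprof2] are its first two derivatives in q. *)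
Definition rprof (A r k q : R) := A * Rpower (r / (q - r ^ 2)) k.
Definition rprof1 (A r k q : R) := - k * rprof A r k q / (q - r ^ 2).
Definition rprof2 (A r k q : R) := k * (k + 1) * rprof A r k q / (q - r ^ 2) ^ 2.

Lemma rprof_gt0 A r k q : 0 < A -> 0 < rprof A r k q.
Proof. by move=> A_gt0; apply: Rmult_lt_0_compat => //; apply: exp_pos. Qed.

(* [q - r ^ 2] as [auto_derive] prints it *)
Lemma sub_sq_eq r q : q + - (r * (r * 1)) = q - r ^ 2.
Proof. by rewrite /=; ring. Qed.

Lemma rprof_derive A r k q : 0 < r -> r ^ 2 < q ->
  derivable_pt_lim (rprof A r k) q (rprof1 A r k q).
Proof.
move=> r_gt0 rq; apply/is_derive_Reals; rewrite /rprof1 /rprof /Rpower.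
have pos : 0 < r / (q - r ^ 2) by apply: Rdiv_lt_0_compat; lra.
auto_derive; rewrite sub_sq_eq; first by repeat split; lra.
by rewrite -/(Rdiv r (q - r ^ 2)); field; lra.
Qed.

Lemma rprof1_derive A r k q : 0 < r -> r ^ 2 < q ->
  derivable_pt_lim (rprof1 A r k) q (rprof2 A r k q).
Proof.
move=> r_gt0 rq; apply/is_derive_Reals; rewrite /rprof2 /rprof1 /rprof /Rpower.
have pos : 0 < r / (q - r ^ 2) by apply: Rdiv_lt_0_compat; lra.
auto_derive; rewrite sub_sq_eq; first by repeat split; lra.
by rewrite -/(Rdiv r (q - r ^ 2)); field; lra.
Qed.

Lemma rprof1_cont A r k q : 0 < r -> r ^ 2 < q -> continuity_pt (rprof1 A r k) q.
Proof.
by move=> r_gt0 rq; apply: derivable_continuous_pt; exists (rprof2 A r k q);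
  apply: rprof1_derive.
Qed.

Lemma rprof2_cont A r k q : 0 < r -> r ^ 2 < q -> continuity_pt (rprof2 A r k) q.
Proof.
move=> r_gt0 rq; apply: derivable_continuous_pt.
have pos : 0 < r / (q - r ^ 2) by apply: Rdiv_lt_0_compat; lra.
have : ex_derive (rprof2 A r k) q.
  rewrite /rprof2 /rprof /Rpower; auto_derive; rewrite sub_sq_eq.
  by repeat split; try apply: Rmult_integral_contrapositive; lra.
by move=> /Derive_correct /is_derive_Reals dF; exists (Derive (rprof2 A r k) q).
Qed.

Lemma rprof_cont_radius A k q r : 0 < r -> r ^ 2 < q ->
  continuity_pt (fun s => rprof A s k q) r.
Proof.
move=> r_gt0 rq; apply: derivable_continuous_pt.
have pos : 0 < r / (q - r ^ 2) by apply: Rdiv_lt_0_compat; lra.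
have : ex_derive (fun s => rprof A s k q) r.
  by rewrite /rprof /Rpower; auto_derive; rewrite sub_sq_eq; repeat split; lra.
by move=> /Derive_correct /is_derive_Reals dF; exists (Derive (fun s => rprof A s k q) r).
Qed.

Definition rgrad {n} (A r k : R) (x0 y : vec n) : vec n :=
  fun j => rprof1 A r k (sqdist x0 y) * (2 * (y j - x0 j)).

Definition rhess {n} (A r k : R) (x0 y : vec n) : mat n :=
  fun i j => rprof1 A r k (sqdist x0 y) * (2 * (if i == j then 1 else 0))
             + 2 * (y i - x0 i) * (rprof2 A r k (sqdist x0 y) * (2 * (y j - x0 j))).

Lemma sqdist_gt {n} (x0 x : vec n) r : 0 <= r -> r < ndist x x0 -> r ^ 2 < sqdist x0 x.
Proof. by move=> r_ge0 rx; rewrite /sqdist -ndist_sq /=; nra. Qed.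

Lemma IsC2_radial {n} (U : vec n -> Prop) A r k (x0 : vec n) : 0 < r ->
  (forall x, U x -> r < ndist x x0) ->
  IsC2 U (fun y => rprof A r k (sqdist x0 y)) (rgrad A r k x0) (rhess A r k x0).
Proof.
move=> r_gt0 Uout; split; [|split] => x Ux;
  have rq := sqdist_gt x0 x r (Rlt_le _ _ r_gt0) (Uout x Ux).
- exact: has_grad_at_comp (rprof_derive A r k _ r_gt0 rq) (has_grad_at_sqdist x0 x).
- move=> i; apply: has_grad_at_mul (has_grad_at_coordZ 2 x0 x i).
  exact: has_grad_at_comp (rprof1_derive A r k _ r_gt0 rq) (has_grad_at_sqdist x0 x).
- move=> i j eps eps_gt0.
  have cq := has_grad_at_cont (has_grad_at_sqdist x0 x).
  have c1 := cont_at_comp _ _ _ (rprof1_cont A r k _ r_gt0 rq) cq.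
  have c2 := cont_at_comp _ _ _ (rprof2_cont A r k _ r_gt0 rq) cq.
  have ci := has_grad_at_cont (has_grad_at_coordZ 2 x0 x i).
  have cj := has_grad_at_cont (has_grad_at_coordZ 2 x0 x j).
  have [d [d_gt0 hd]] := cont_at_add _ _ _
    (cont_at_mul _ _ _ c1 (cont_at_const (2 * (if i == j then 1 else 0)) x))
    (cont_at_mul _ _ _ ci (cont_at_mul _ _ _ c2 cj)) eps eps_gt0.
  by exists d; split => // y _; apply: hd.
Qed.

Definition uexp (n : nat) := (INR n - 2) / 2.

Lemma u_outE n A r (x0 : vec n) :
  u_out n A r x0 = fun x => rprof A r (uexp n) (sqdist x0 x).
Proof. by apply: functional_extensionality => x; rewrite /u_out /rprof ndist_sq. Qed.

Lemma uexp_gt0 {n} : (3 <= n)%nat -> 0 < uexp n.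
Proof. by move=> /leP /le_INR /= n_ge3; rewrite /uexp; lra. Qed.

Lemma conf_hess_radial n A r (x0 x : vec n) i j :
  (3 <= n)%nat -> 0 < A -> 0 < r -> r ^ 2 < sqdist x0 x ->
  let u := rprof A r (uexp n) (sqdist x0 x) in
  conf_hess n u (rgrad A r (uexp n) x0 x) (rhess A r (uexp n) x0 x) i j =
  - (2 * r ^ 2 / (sqdist x0 x - r ^ 2) ^ 2 * Rpower u (- (2 / uexp n)))
    * (if i == j then 1 else 0).
Proof.
move=> n_ge3 A_gt0 r_gt0 rq u; have k_gt0 := uexp_gt0 n_ge3.
have u_gt0 : 0 < u by apply: rprof_gt0.
have n_eq : INR n = 2 * uexp n + 2 by rewrite /uexp; field.
set k := uexp n in k_gt0 n_eq *; set Z := Rpower u (- (2 / k)).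
have pow1 : Rpower u (- ((INR n + 2) / (INR n - 2))) = Z * / u.
  have -> : - ((INR n + 2) / (INR n - 2)) = - (2 / k) + - 1 by rewrite n_eq; field; lra.
  by rewrite Rpower_plus (Rpower_Ropp u 1) Rpower_1.
have pow2 : Rpower u (- (2 * INR n / (INR n - 2))) = Z * / u ^ 2.
  have -> : - (2 * INR n / (INR n - 2)) = - (2 / k) + - INR 2 by rewrite n_eq /=; field; lra.
  by rewrite Rpower_plus (Rpower_Ropp u (INR 2)) Rpower_pow.
have grad_sq : dot (rgrad A r k x0 x) (rgrad A r k x0 x)
               = rprof1 A r k (sqdist x0 x) ^ 2 * 4 * sqdist x0 x.
  by rewrite /rgrad /dot /sqdist -rsumMl; apply: eq_rsum => l; rewrite /vsub; ring.
rewrite /conf_hess pow1 pow2 grad_sq /rhess /rgrad /rprof1 /rprof2 -/u.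
have -> : sqdist x0 x = (sqdist x0 x - r ^ 2) + r ^ 2 by ring.
set s := sqdist x0 x - r ^ 2; have s_gt0 : 0 < s by rewrite /s; lra.
by rewrite n_eq; case: (i == j); field; lra.
Qed.

Lemma is_eigvals_scalar {n} (M : mat n) lam :
  (forall i j, M i j = lam * (if i == j then 1 else 0)) -> is_eigvals M (fun _ => lam).
Proof.
move=> M_scalar; exists (fun i l => if i == l then 1 else 0); split => [i j|i].
- rewrite /dot (eq_rsum _ (fun l => if i == l then (if j == l then 1 else 0) else 0)).
    by rewrite rsum_delta eq_sym.
  by move=> l; case: (i == l); ring.
- apply: functional_extensionality => l; rewrite /matvec /vscale.
  rewrite (eq_rsum _ (fun m => if i == m then lam * (if l == m then 1 else 0) else 0)).
    by rewrite rsum_delta eq_sym.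
  by move=> m; rewrite M_scalar; case: (i == m); ring.
Qed.

Lemma IsC2_u_out {n} (U : vec n -> Prop) A r (x0 : vec n) : 0 < r ->
  (forall x, U x -> r < ndist x x0) ->
  IsC2 U (u_out n A r x0) (rgrad A r (uexp n) x0) (rhess A r (uexp n) x0).
Proof. by rewrite u_outE; apply: IsC2_radial. Qed.

Lemma u_out_gt0 n A r (x0 x : vec n) : 0 < A -> 0 < u_out n A r x0 x.
Proof. by rewrite u_outE; apply: rprof_gt0. Qed.

Lemma u_outZ n t A r (x0 x : vec n) : u_out n (t * A) r x0 x = t * u_out n A r x0 x.
Proof. by rewrite /u_out Rmult_assoc. Qed.

Lemma u_out_cont n A r (x0 x : vec n) : 0 < r -> r < ndist x x0 -> cont_at (u_out n A r x0) x.
Proof.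
move=> r_gt0 rx; have [grad _] := IsC2_u_out (fun y => r < ndist y x0) A r x0 r_gt0 (fun _ h => h).
exact/has_grad_at_cont/grad.
Qed.


Lemma u_out_le n A rho Rr (x0 y : vec n) :
  (3 <= n)%nat -> 0 < A -> 0 < rho < Rr -> Rr < ndist y x0 ->
  u_out n A rho x0 y <= A * Rpower (rho / (Rr ^ 2 - rho ^ 2)) (uexp n).
Proof.
move=> n_ge3 A_gt0 rho_pos Ry; have := sqdist_gt x0 y Rr ltac:(lra) Ry.
rewrite u_outE /rprof => Rq; apply: Rmult_le_compat_l; first lra.
apply: Rle_Rpower_l; first exact/Rlt_le/uexp_gt0.
have gap_gt0 : 0 < Rr ^ 2 - rho ^ 2 by nra.
split; first by apply: Rdiv_lt_0_compat; lra.
by apply: Rmult_le_compat_l; [lra|apply: Rinv_le_contravar; lra].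
Qed.


Lemma u_out_smaller_radius n A Rr (x0 x : vec n) W : 0 < Rr -> Rr < ndist x x0 ->
  W < u_out n A Rr x0 x -> exists rho, 0 < rho < Rr /\ W < u_out n A rho x0 x.
Proof.
rewrite u_outE => R_gt0 Rx W_lt; have Rq := sqdist_gt x0 x Rr (Rlt_le _ _ R_gt0) Rx.
have [del [del_gt0 near]] := continuity_pt_ball (rprof_cont_radius A (uexp n) _ _ R_gt0 Rq)
  (rprof A Rr (uexp n) (sqdist x0 x) - W) ltac:(lra).
set rho := Rmax (Rr / 2) (Rr - del / 2).
have rho_gt : Rr / 2 <= rho /\ Rr - del / 2 <= rho by split; [apply: Rmax_l|apply: Rmax_r].
have rho_lt : rho < Rr by apply: Rmax_lub_lt; lra.
exists rho; split; first lra.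
have /Rabs_def2 [] := near rho ltac:(rewrite Rabs_left; lra).
by rewrite u_outE; lra.
Qed.


Lemma u_out_eigvals n A r (x0 x : vec n) :
  (3 <= n)%nat -> 0 < A -> 0 < r -> r < ndist x x0 ->
  is_eigvals
    (mopp (conf_hess n (u_out n A r x0 x) (rgrad A r (uexp n) x0 x) (rhess A r (uexp n) x0 x)))
    (fun _ => 2 * r ^ 2 / (sqdist x0 x - r ^ 2) ^ 2
              * Rpower (u_out n A r x0 x) (- (2 / uexp n))).
Proof.
move=> n_ge3 A_gt0 r_gt0 rx; apply: is_eigvals_scalar => i j.
rewrite /mopp u_outE conf_hess_radial //; first ring.
exact: sqdist_gt (Rlt_le _ _ r_gt0) rx.
Qed.

Lemma Rpower_gt1 c p : 1 < c -> 0 < p -> 1 < Rpower c p.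
Proof. by move=> c_gt1 p_gt0; rewrite -{1}(Rpower_O c); [apply: Rpower_lt|lra]. Qed.

Lemma Rpower_Ropp_gt1 t e : 0 < t < 1 -> 0 < e -> 1 < Rpower t (- e).
Proof.
move=> t01 e_gt0; rewrite /Rpower -exp_0; apply: exp_increasing.
have : ln t < 0 by rewrite -ln_1; apply: ln_increasing; lra.
nra.
Qed.

Lemma nclosure_scale {n} (Gam : vec n -> Prop) mu t :
  (forall l s, Gam l -> 0 < s -> Gam (vscale s l)) ->
  nclosure Gam mu -> 0 < t -> nclosure Gam (vscale t mu).
Proof.
move=> Gam_cone mu_cl t_gt0 eps eps_gt0.
have [y [Gy muy]] := mu_cl (eps / t) ltac:(apply: Rdiv_lt_0_compat; lra).
exists (vscale t y); split; first exact: Gam_cone.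
rewrite ndistZ; last lra.
have -> : eps = t * (eps / t) by field; lra.
exact: Rmult_lt_compat_l.
Qed.

Lemma structural_scale_gt1 n f Gam (mu : vec n) c : structural n f Gam ->
  nclosure Gam mu -> f mu = 1 -> 1 < c ->
  nclosure Gam (vscale c mu) /\ 1 < f (vscale c mu).
Proof.
move=> [_ [_ [_ [Gam_cone [_ [_ [_ [_ [_ [_ [_ [p [p_gt0 f_hom]]]]]]]]]]]]] mu_cl f_mu c_gt1.
split; first by apply: nclosure_scale => //; lra.
by rewrite f_hom ?f_mu ?Rmult_1_r; [apply: Rpower_gt1|done|lra].
Qed.

Lemma scaled_u_out_not_below n f Gam alpha (Om : vec n -> Prop) w rho (x0 : vec n) t xb :
  (3 <= n)%nat -> structural n f Gam -> canonical_const n f Gam alpha ->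
  visc_supersol f Gam Om w -> 0 < rho -> (forall y, Om y -> rho < ndist y x0) ->
  0 < t < 1 -> Om xb ->
  (forall y, Om y -> ER_le (t * u_out n alpha rho x0 y) (w y)) ->
  w xb = ERfin (t * u_out n alpha rho x0 xb) -> False.
Proof.
move=> n_ge3 fs [alpha_gt0 [u_out_sol _]] [_ [_ w_super]] rho_gt0 Om_out t01 Oxb
  w_above w_touch.
have xb_out := Om_out xb Oxb.
have ta_gt0 : 0 < t * alpha by apply: Rmult_lt_0_compat; lra.
set lam := 2 * rho ^ 2 / (sqdist x0 xb - rho ^ 2) ^ 2
           * Rpower (u_out n alpha rho x0 xb) (- (2 / uexp n)).
have [mu_cl f_mu] := u_out_sol rho x0 rho_gt0 _ _ (IsC2_u_out _ alpha rho x0 rho_gt0 (fun _ h => h))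
  xb xb_out _ (u_out_eigvals n alpha rho x0 xb n_ge3 alpha_gt0 rho_gt0 xb_out).
rewrite -/lam in mu_cl f_mu.
set c := Rpower t (- (2 / uexp n)).
have c_gt1 : 1 < c.
  by apply: Rpower_Ropp_gt1 => //; apply: Rdiv_lt_0_compat; [lra|exact: uexp_gt0].
have eig_t := u_out_eigvals n (t * alpha) rho x0 xb n_ge3 ta_gt0 rho_gt0 xb_out.
have {eig_t}eig_t : is_eigvals (mopp (conf_hess n (u_out n (t * alpha) rho x0 xb)
    (rgrad (t * alpha) rho (uexp n) x0 xb) (rhess (t * alpha) rho (uexp n) x0 xb)))
    (vscale c (fun _ => lam)).
  move: eig_t; rewrite u_outZ -Rpower_mult_distr; [|lra|exact: u_out_gt0].
  congr is_eigvals; apply: functional_extensionality => i.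
  by rewrite /vscale /lam /c; ring.
have [mu_cl' f_mu'] := structural_scale_gt1 n f Gam _ c fs mu_cl f_mu c_gt1.
have touch : w xb = ERfin (u_out n (t * alpha) rho x0 xb) by rewrite u_outZ.
have below : exists d, 0 < d /\ forall y, Om y -> ndist y xb < d ->
    ER_le (u_out n (t * alpha) rho x0 y) (w y).
  by exists 1; split => [|y Oy _]; [lra|rewrite u_outZ; apply: w_above].
by case: (w_super xb Oxb _ _ _ (IsC2_u_out Om (t * alpha) rho x0 rho_gt0 Om_out)
  touch below _ eig_t) => [/(_ mu_cl')|]; lra.
Qed.

(** * Convergent subsequences *)

Definition subseq_cvg {n} (X : nat -> vec n) (phi : nat -> nat) (xb : vec n) :=
  forall e, 0 < e -> exists N : nat, forall j, (N <= j)%nat -> ndist (X (phi j)) xb < e.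

Lemma subseq_index_ge (phi : nat -> nat) :
  {homo phi : i j / (i < j)%nat} -> forall j, (j <= phi j)%nat.
Proof. by move=> phi_incr; elim=> [|j IHj] //; have := phi_incr j j.+1 (ltnSn j); lia. Qed.

Lemma inv_succ_gt0 j : 0 < / (INR j + 1).
Proof. by apply: Rinv_0_lt_compat; have := pos_INR j; lra. Qed.

Lemma inv_succ_le1 j : / (INR j + 1) <= 1.
Proof. by rewrite -Rinv_1; apply: Rinv_le_contravar; [lra|have := pos_INR j; lra]. Qed.

Lemma inv_succ_lt {e} : 0 < e -> exists N : nat, forall j, (N <= j)%nat -> / (INR j + 1) < e.
Proof.
move=> e_gt0; have [N [N_lt N_gt0]] := archimed_cor1 e e_gt0; exists N => j /leP /le_INR Nj.
have : 0 < INR N by apply: lt_0_INR.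
by move=> N_pos; apply: Rle_lt_trans N_lt; apply: Rinv_le_contravar => //; lra.
Qed.

Lemma bounded_seq_cvg_subseqR (s : nat -> R) M : (forall k, Rabs (s k) <= M) ->
  exists phi, {homo phi : i j / (i < j)%nat} /\ exists l, forall e, 0 < e ->
    exists N : nat, forall j, (N <= j)%nat -> Rabs (s (phi j) - l) < e.
Proof.
move=> s_bd.
have [l l_adh] := Bolzano_Weierstrass s (fun c => -M <= c <= M) (compact_P3 (-M) M)
  ltac:(by move=> k; have := s_bd k; rewrite Rabs_le_between).
have pick : forall N j, {p : nat | (N <= p)%nat /\ Rabs (s p - l) < / (INR j + 1)}.
  move=> N j; apply: constructive_indefinite_description.
  have pos := inv_succ_gt0 j.
  have [p [/leP Np sp]] := l_adh (fun y => Rabs (y - l) < / (INR j + 1)) N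
    ltac:(by exists (mkposreal _ pos)).
  by exists p.
pose fix phi (j : nat) : nat :=
  if j is j'.+1 then proj1_sig (pick (phi j').+1 j) else proj1_sig (pick 0%nat 0%nat).
have phi_spec j : Rabs (s (phi j) - l) < / (INR j + 1).
  case: j => [|j] /=; first by case: (proj2_sig (pick 0%nat 0%nat)).
  by case: (proj2_sig (pick (phi j).+1 j.+1)).
exists phi; split.
  apply: (@homo_ltn _ _ (fun a b => (a < b)%nat)) => [a b c|j]; first exact: ltn_trans.
  by case: (proj2_sig (pick (phi j).+1 j.+1)).
exists l => e e_gt0; have [N HN] := inv_succ_lt e_gt0.
by exists N => j Nj; apply: Rlt_trans (phi_spec j) (HN j Nj).
Qed.

Lemma bounded_seq_coord_cvg_subseq {n} (X : nat -> vec n) M : (forall k i, Rabs (X k i) <= M) ->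
  forall m, (m <= n)%nat -> exists phi, {homo phi : i j / (i < j)%nat} /\
    exists xb : vec n, forall e, 0 < e -> exists N : nat, forall j, (N <= j)%nat ->
      forall i : 'I_n, (i < m)%nat -> Rabs (X (phi j) i - xb i) < e.
Proof.
move=> X_bd; elim=> [|m IHm] m_le.
  by exists (fun j : nat => j); split => //; exists (X 0%nat) => e _; exists 0%nat.
have [phi [phi_incr [xb xb_lim]]] := IHm (ltnW m_le).
have [psi [psi_incr [l l_lim]]] := bounded_seq_cvg_subseqR (fun j => X (phi j) (Ordinal m_le)) M
  (fun k => X_bd _ _).
exists (fun j => phi (psi j)); split => [a b ab|]; first exact/phi_incr/psi_incr.
exists (fun i => if nat_of_ord i == m then l else xb i) => e e_gt0.
have [N1 HN1] := xb_lim e e_gt0; have [N2 HN2] := l_lim e e_gt0.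
exists (maxn N1 N2) => j Nj i im; case: eqP => [im_eq|im_neq].
- have -> : i = Ordinal m_le by apply: val_inj.
  by apply: HN2; lia.
- apply: HN1; last lia.
  by have := subseq_index_ge _ psi_incr j; lia.
Qed.

Lemma bounded_seq_cvg_subseq {n} (X : nat -> vec n) M : (forall k, nnorm (X k) <= M) ->
  exists phi xb, {homo phi : i j / (i < j)%nat} /\ subseq_cvg X phi xb.
Proof.
move=> X_bd.
have [phi [phi_incr [xb xb_lim]]] := bounded_seq_coord_cvg_subseq X M
  (fun k i => Rle_trans _ _ _ (Rabs_coord_le_nnorm (X k) i) (X_bd k)) n (leqnn n).
exists phi, xb; split => // e e_gt0; have sq_ge0 := sqrt_pos (INR n).
have e'_gt0 : 0 < e / (sqrt (INR n) + 1) by apply: Rdiv_lt_0_compat; lra.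
have [N HN] := xb_lim _ e'_gt0; exists N => j Nj.
apply: Rle_lt_trans (ndist_le_coord _ _ _ e'_gt0 (fun i => HN j Nj i (ltn_ord i))) _.
have -> : sqrt (INR n) * (e / (sqrt (INR n) + 1)) = e * (sqrt (INR n) / (sqrt (INR n) + 1)).
  by field; lra.
rewrite -{2}(Rmult_1_r e); apply: Rmult_lt_compat_l => //.
by apply: (Rmult_lt_reg_r (sqrt (INR n) + 1)); [lra|field_simplify; lra].
Qed.

Lemma subseq_limit_in_dom {n} (Om : vec n -> Prop) (X : nat -> vec n) phi xb d :
  0 < d -> (forall j, Om (X j)) ->
  (forall j, ~ exists z, nboundary Om z /\ ndist (X j) z < d) ->
  subseq_cvg X phi xb -> Om xb.
Proof.
move=> d_gt0 OX X_far X_cvg; apply: NNPP => xb_out.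
have xb_cl : nclosure Om xb.
  move=> eps /X_cvg [N HN]; exists (X (phi N)); split => //.
  by rewrite ndist_sym; apply: HN.
have [N HN] := X_cvg d d_gt0.
by apply: (X_far (phi N)); exists xb; split => //; apply: HN.
Qed.

(** * Touching a lower semicontinuous function from below *)

Lemma ER_lt_le a e : ER_lt a e -> ER_le a e.
Proof. by case: e => //= r; apply: Rlt_le. Qed.

Lemma ER_lt_dense a e : ER_lt a e -> exists b, a < b /\ ER_lt b e.
Proof.
case: e => [r /= ar|_]; last by exists (a + 1); split => //; lra.
by exists ((a + r) / 2); split; lra.
Qed.

Lemma ER_le_trans a b e : a <= b -> ER_le b e -> ER_le a e.
Proof. by case: e => //= r; lra. Qed.


Lemma lsc_not_gt {n} (Om : vec n -> Prop) w xb c : lsc_on Om w -> Om xb ->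
  (forall b d, c < b -> 0 < d -> exists y, Om y /\ ndist y xb < d /\ ~ ER_le b (w y)) ->
  ~ ER_lt c (w xb).
Proof.
move=> w_lsc Oxb near_low /ER_lt_dense [b [cb /(w_lsc xb Oxb) [d [d_gt0 hd]]]].
have [y [Oy [yd w_low]]] := near_low b d cb d_gt0.
exact/w_low/ER_lt_le/hd.
Qed.

Section TouchFromBelow.

Variables (n : nat) (Om : vec n -> Prop) (w : vec n -> ER) (u : vec n -> R) (B M : R).
Hypothesis Om_bounded : forall x, Om x -> nnorm x <= B.
Hypothesis w_lsc : lsc_on Om w.
Hypothesis w_gt0 : forall x, Om x -> ER_lt 0 (w x).
Hypothesis w_blowup : forall K, exists d, 0 < d /\ forall x, Om x ->
  (exists y, nboundary Om y /\ ndist x y < d) -> ER_lt K (w x).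
Hypothesis u_gt0 : forall x, 0 < u x.
Hypothesis u_le : forall x, Om x -> u x <= M.
Hypothesis u_cont : forall x, Om x -> cont_at u x.

Definition scaled_below t := 0 <= t /\ forall y, Om y -> ER_le (t * u y) (w y).

Lemma scaled_below_le t y v : scaled_below t -> Om y -> w y = ERfin v -> t <= v / u y.
Proof.
move=> [_ t_below] Oy wy; have := t_below y Oy; rewrite wy /= => tv.
have uy_gt0 := u_gt0 y; apply: (Rmult_le_reg_r (u y)) => //.
by rewrite /Rdiv Rmult_assoc Rinv_l; lra.
Qed.

Lemma scaled_below_max x W : Om x -> w x = ERfin W ->
  exists ts, scaled_below ts /\ (forall t, scaled_below t -> t <= ts) /\ ts <= W / u x.
Proof.
move=> Ox wx.
have below0 : scaled_below 0.
  split => [|y Oy]; first lra.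
  by have := w_gt0 y Oy; case: (w y) => //= v; lra.
have bd : bound scaled_below by exists (W / u x) => t tb; apply: scaled_below_le tb Ox wx.
have [ts [ts_ub ts_lub]] := completeness scaled_below bd (ex_intro _ 0 below0).
have ts_ge0 : 0 <= ts := ts_ub 0 below0.
exists ts; split; last split => //; last by apply: ts_lub => t tb; apply: scaled_below_le tb Ox wx.
split => // y Oy; case wy : (w y) => [v|] //=.
have uy_gt0 := u_gt0 y.
have : ts <= v / u y by apply: ts_lub => t tb; apply: scaled_below_le tb Oy wy.
move=> /(Rmult_le_compat_r (u y)) -/(_ (Rlt_le _ _ uy_gt0)).
by rewrite /Rdiv Rmult_assoc Rinv_l; lra.
Qed.

Lemma scaled_below_gap ts : 0 <= ts -> (forall t, scaled_below t -> t <= ts) ->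
  forall e, 0 < e -> exists y, Om y /\ ~ ER_le ((ts + e) * u y) (w y).
Proof.
move=> ts_ge0 ts_max e e_gt0; apply: NNPP => no_gap.
have : scaled_below (ts + e); last by move=> /ts_max; lra.
split => [|y Oy]; first lra.
by apply: NNPP => not_le; apply: no_gap; exists y.
Qed.

Lemma subseq_points_below ts X phi xb :
  0 <= ts <= 1 -> {homo phi : i j / (i < j)%nat} ->
  (forall j, Om (X j) /\ ~ ER_le ((ts + / (INR j + 1)) * u (X j)) (w (X j))) ->
  subseq_cvg X phi xb -> Om xb ->
  forall b d, ts * u xb < b -> 0 < d -> exists y, Om y /\ ndist y xb < d /\ ~ ER_le b (w y).
Proof.
move=> ts01 phi_incr X_low X_cvg Oxb b d b_gt d_gt0.
set gap := b - ts * u xb; have gap_gt0 : 0 < gap by rewrite /gap; lra.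
have uxb_gt0 := u_gt0 xb.
have [du [du_gt0 u_near]] := u_cont xb Oxb (gap / 4) ltac:(lra).
have [N0 HN0] := X_cvg (Rmin d du) (Rmin_pos _ _ d_gt0 du_gt0).
have [N1 HN1] : exists N1 : nat, forall j, (N1 <= j)%nat ->
    / (INR j + 1) < gap / (4 * (u xb + gap + 1)).
  by apply: inv_succ_lt; apply: Rdiv_lt_0_compat; lra.
set j := maxn N0 N1; set y := X (phi j).
have yd : ndist y xb < Rmin d du by apply: HN0; rewrite /j; lia.
have [Oy y_low] := X_low (phi j).
exists y; split => //; split; first exact: Rlt_le_trans yd (Rmin_l _ _).
apply: contra_not y_low; apply: ER_le_trans.
have /Rabs_def2 [uy_le _] := u_near y (Rlt_le_trans _ _ _ yd (Rmin_r _ _)).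
have inv_small : / (INR (phi j) + 1) < gap / (4 * (u xb + gap + 1)).
  by apply: HN1; have := subseq_index_ge _ phi_incr j; rewrite /j; lia.
have inv_gt0 := inv_succ_gt0 (phi j).
have uy_gt0 := u_gt0 y.
have ts_term : ts * u y <= ts * u xb + gap / 4 by nra.
have inv_term : / (INR (phi j) + 1) * u y <= gap / 4.
  apply: Rle_trans (_ : gap / (4 * (u xb + gap + 1)) * (u xb + gap + 1) <= _).
    by apply: Rmult_le_compat; lra.
  by right; field; lra.
by rewrite -/y; have gap_def : gap = b - ts * u xb by []; lra.
Qed.

Lemma scaled_below_touch ts :
  scaled_below ts -> (forall t, scaled_below t -> t <= ts) -> ts <= 1 ->
  exists xb, Om xb /\ w xb = ERfin (ts * u xb).
Proof.
move=> ts_below ts_max ts_le1; have ts_ge0 := proj1 ts_below.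
have gap j := scaled_below_gap ts ts_ge0 ts_max _ (inv_succ_gt0 j).
have [X X_low] : exists X : nat -> vec n, forall j,
    Om (X j) /\ ~ ER_le ((ts + / (INR j + 1)) * u (X j)) (w (X j)).
  exists (fun j => proj1_sig (constructive_indefinite_description _ (gap j))) => j.
  exact: proj2_sig (constructive_indefinite_description _ (gap j)).
have [d [d_gt0 near_bd]] := w_blowup (2 * M).
have X_far j : ~ exists z, nboundary Om z /\ ndist (X j) z < d.
  have [OXj X_lowj] := X_low j; move=> /(near_bd _ OXj) w_big; apply: X_lowj.
  apply: ER_le_trans (ER_lt_le _ _ w_big).
  have := u_le _ OXj; have := u_gt0 (X j); have := inv_succ_le1 j; have := inv_succ_gt0 j.
  nra.
have [phi [xb [phi_incr X_cvg]]] :=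
  bounded_seq_cvg_subseq X B (fun k => Om_bounded _ (proj1 (X_low k))).
have Oxb := subseq_limit_in_dom Om X phi xb d d_gt0 (fun j => proj1 (X_low j)) X_far X_cvg.
exists xb; split => //.
have := lsc_not_gt Om w xb (ts * u xb) w_lsc Oxb
  (subseq_points_below ts X phi xb (conj ts_ge0 ts_le1) phi_incr X_low X_cvg Oxb).
by have := proj2 ts_below xb Oxb; case: (w xb) => [v /= ts_le ts_nlt|//]; f_equal; lra.
Qed.

Lemma touch_from_below x W : Om x -> w x = ERfin W -> W < u x ->
  exists t xb, 0 < t < 1 /\ Om xb /\
    (forall y, Om y -> ER_le (t * u y) (w y)) /\ w xb = ERfin (t * u xb).
Proof.
move=> Ox wx W_lt; have ux_gt0 := u_gt0 x.
have [ts [[ts_ge0 ts_below] [ts_max ts_le]]] := scaled_below_max x W Ox wx.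
have ts_lt1 : ts < 1.
  apply: Rle_lt_trans ts_le _; apply: (Rmult_lt_reg_r (u x)) => //.
  by rewrite /Rdiv Rmult_assoc Rinv_l; lra.
have [xb [Oxb touch]] :=
  scaled_below_touch ts (conj ts_ge0 ts_below) ts_max (Rlt_le _ _ ts_lt1).
exists ts, xb; do !split => //.
by have := w_gt0 xb Oxb; rewrite touch /=; have := u_gt0 xb; nra.
Qed.

End TouchFromBelow.

(** * Comparison with the canonical solution *)

Lemma dom_outside_ball {n} (Om : vec n -> Prop) (x0 : vec n) Rr : is_open Om -> 0 < Rr ->
  (forall y, ndist y x0 < Rr -> ~ nclosure Om y) -> forall y, Om y -> Rr < ndist y x0.
Proof.
move=> Om_open R_gt0 ball_out y Oy; apply: Rnot_le_lt => yR.
have self_cl z : Om z -> nclosure Om z by move=> Oz eps eps_gt0; exists z; rewrite ndistxx.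
have [yR_lt|yR_eq] := Rle_lt_or_eq_dec _ _ yR; first exact: ball_out y yR_lt (self_cl y Oy).
have [d [d_gt0 near_y]] := Om_open y Oy.
set t := Rmin (1 / 2) (d / (2 * Rr)).
have t_pos : 0 < t /\ t <= 1 / 2 /\ t <= d / (2 * Rr).
  split; [apply: Rmin_pos; [lra|apply: Rdiv_lt_0_compat; lra]|split; [apply: Rmin_l|apply: Rmin_r]].
set z := vadd y (vscale t (vsub x0 y)).
have zx0 : ndist z x0 = (1 - t) * Rr.
  rewrite -yR_eq -ndistZ; last lra.
  by congr nnorm; apply: functional_extensionality => i; rewrite /z /vsub /vadd /vscale; ring.
have zy : ndist z y = t * Rr.
  rewrite -yR_eq (ndist_sym y x0) /ndist -(Rabs_right t); last lra.
  by rewrite -nnormZ; congr nnorm; apply: functional_extensionality => i;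
    rewrite /z /vsub /vadd /vscale; ring.
have Oz : Om z.
  apply: near_y; rewrite zy; apply: (Rle_lt_trans _ (d / (2 * Rr) * Rr)).
    by apply: Rmult_le_compat_r; lra.
  by rewrite /Rdiv Rinv_mult; field_simplify; lra.
by apply: (ball_out z) (self_cl z Oz); rewrite zx0; nra.
Qed.

Theorem lemma3p2 (n : nat) (f : vec n -> R) (Gam : vec n -> Prop) (alpha : R)
  (Om : vec n -> Prop) (w : vec n -> ER) (Rr : R) (x0 : vec n) :
  (3 <= n)%nat ->
  structural n f Gam ->
  canonical_const n f Gam alpha ->
  ndomain Om -> nbounded Om ->
  (forall x, Om x -> ER_lt 0 (w x)) ->
  visc_supersol f Gam Om w ->
  (forall M, exists d, 0 < d /\ forall x, Om x ->
     (exists y, nboundary Om y /\ ndist x y < d) -> ER_lt M (w x)) ->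
  0 < Rr ->
  (forall y, ndist y x0 < Rr -> ~ nclosure Om y) ->
  forall x, Om x -> 0 < u_out n alpha Rr x0 x /\ ER_le (u_out n alpha Rr x0 x) (w x).
Proof.
move=> n_ge3 fs fcan [Om_open _] [B Om_bounded] w_gt0 w_super w_blowup R_gt0 ball_out x Ox.
have alpha_gt0 := proj1 fcan.
have Om_out := dom_outside_ball Om x0 Rr Om_open R_gt0 ball_out.
split; first exact: u_out_gt0.
case wx : (w x) => [W|] //=; apply: Rnot_lt_le => W_lt.
have [rho [rho_pos W_lt_rho]] := u_out_smaller_radius n alpha Rr x0 x W R_gt0 (Om_out x Ox) W_lt.
have Om_out_rho y : Om y -> rho < ndist y x0.
  by move=> /Om_out; apply: Rlt_trans (proj2 rho_pos).
have [t [xb [t01 [Oxb [t_below touch]]]]] :=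
  touch_from_below n Om w (u_out n alpha rho x0) B _ Om_bounded (proj1 w_super) w_gt0 w_blowup
    (fun y => u_out_gt0 n alpha rho x0 y alpha_gt0)
    (fun y Oy => u_out_le n alpha rho Rr x0 y n_ge3 alpha_gt0 rho_pos (Om_out y Oy))
    (fun y Oy => u_out_cont n alpha rho x0 y (proj1 rho_pos) (Om_out_rho y Oy))
    x W Ox wx W_lt_rho.
exact: (scaled_u_out_not_below n f Gam alpha Om w rho x0 t xb n_ge3 fs fcan w_super
  (proj1 rho_pos) Om_out_rho t01 Oxb t_below touch).
Qed.
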